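(* Let $(d_A,d_B)$ be a bipartite degree sequence that has a realization with matching number $\nu_{\min}$ and a realization with matching number $\nu_{\max}$, and let $\nu$ be an integer with $\nu_{\min}\leq\nu\leq\nu_{\max}$. Then $(d_A,d_B)$ has a realization with matching number $\nu$.
   Context: All graphs are finite, simple and undirected. For a bipartite graph with fixed partite sets $A,B$, its bipartite degree sequence is the pair of nonincreasing sequences of degrees of vertices in $A$ and in $B$; a pair of sequences is a bipartite degree sequence if it arises this way from some bipartite graph, called a realization. The matching number is the maximum size of a matching. *)

From mathcomp Require Import all_boot.
Set Implicit Arguments. Unset Strict Implicit. Unset Printing Implicit Defensive.

(* A bipartite graph with fixed partite sets A = 'I_m and B = 'I_n is given by
   its edge set E : {set 'I_m * 'I_n}; (a, b) \in E means a ~ b. *)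

Definition degA m n (E : {set 'I_m * 'I_n}) (a : 'I_m) : nat :=
  #|[set b : 'I_n | (a, b) \in E]|.
Definition degB m n (E : {set 'I_m * 'I_n}) (b : 'I_n) : nat :=
  #|[set a : 'I_m | (a, b) \in E]|.

Definition bdeg_seq m n (E : {set 'I_m * 'I_n}) : seq nat * seq nat :=
  (sort geq [seq degA E a | a <- enum 'I_m], sort geq [seq degB E b | b <- enum 'I_n]).

Definition realizes m n (E : {set 'I_m * 'I_n}) (dA dB : seq nat) : Prop :=
  bdeg_seq E = (dA, dB).

Definition is_matching m n (E M : {set 'I_m * 'I_n}) : bool :=
  (M \subset E) &&
  [forall e1 in M, forall e2 in M, (e1 != e2) ==> (e1.1 != e2.1) && (e1.2 != e2.2)].

Definition matching_number m n (E : {set 'I_m * 'I_n}) : nat :=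
  \max_(M : {set 'I_m * 'I_n} | is_matching E M) #|M|.

From mathcomp Require Import all_boot all_fingroup zify.
From Stdlib Require Import Relation_Operators.
Set Implicit Arguments. Unset Strict Implicit. Unset Printing Implicit Defensive.

(* After relabelling vertices, two realizations of (dA, dB) are graphs E, F on
   the same vertex sets with equal degrees at every vertex.  Such graphs are
   joined by a sequence of 2-switches (trade the edges ab, a'b' for the
   non-edges ab', a'b), each of which shrinks E \ F.  A 2-switch changes the
   matching number by at most one: a maximum matching loses at most the two
   removed edges, and if it used both, ab' can be added back.  Hence the
   matching number takes every value between its two ends along the sequence. *)

Section Matchings.

Variables m n : nat.
Implicit Types E M N : {set 'I_m * 'I_n}.

Lemma matching_number_ge E M : is_matching E M -> #|M| <= matching_number E.
Proof. exact: leq_bigmax_cond. Qed.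

Lemma matching_number_attained E :
  exists2 M, is_matching E M & #|M| = matching_number E.
Proof.
have M0 : is_matching E set0.
  by rewrite /is_matching sub0set; apply/forall_inP => e; rewrite inE.
have : 0 < #|[pred M | is_matching E M]| by apply/card_gt0P; exists set0.
move/(eq_bigmax_cond (fun M : {set _} => #|M|)) => [M HM eqM].
by exists M; rewrite // /matching_number eqM.
Qed.

Lemma matching_sub E M : is_matching E M -> M \subset E.
Proof. by case/andP. Qed.

Lemma matching_apart E M e1 e2 : is_matching E M -> e1 \in M -> e2 \in M ->
  e1 != e2 -> (e1.1 != e2.1) && (e1.2 != e2.2).
Proof. by case/andP=> _ /forall_inP/(_ e1) H /H/forall_inP/(_ e2) H2 /H2/implyP. Qed.

Lemma matching_subset E E' M N : is_matching E M -> N \subset M -> N \subset E' ->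
  is_matching E' N.
Proof.
move=> HM sNM sNE'; rewrite /is_matching sNE'.
apply/forall_inP => e1 i1; apply/forall_inP => e2 i2; apply/implyP.
exact: matching_apart HM (subsetP sNM _ i1) (subsetP sNM _ i2).
Qed.

Lemma matching_setU1 E M e : is_matching E M -> e \in E ->
  (forall f, f \in M -> (f.1 != e.1) && (f.2 != e.2)) -> is_matching E (e |: M).
Proof.
move=> HM eE free; rewrite /is_matching subUset sub1set eE (matching_sub HM) /=.
apply/forall_inP => e1; rewrite in_setU1 => /predU1P [-> | i1];
apply/forall_inP => e2; rewrite in_setU1 => /predU1P [-> | i2]; apply/implyP.
- by rewrite eqxx.
- by have /andP [p q] := free _ i2; rewrite ![e.1 == _]eq_sym ![e.2 == _]eq_sym p q.
- by have /andP [p q] := free _ i1; rewrite p q.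
- exact: matching_apart HM i1 i2.
Qed.

End Matchings.

Lemma cards_exchange (T : finType) (S : {set T}) u v :
  u \in S -> v \notin S -> #|v |: (S :\ u)| = #|S|.
Proof.
move=> uS vS; rewrite cardsU1 (cardsD1 u S) uS !inE negb_and vS orbT.
by rewrite add1n.
Qed.

Ltac simpl_by_hyps := rewrite ?eqxx /=;
  repeat (match goal with
  | H : is_true (?x != ?y) |- context [?x == ?y] => rewrite (negbTE H)
  | H : is_true (?x != ?y) |- context [?y == ?x] => rewrite (eq_sym y x) (negbTE H)
  | H : is_true (?p \in ?X) |- context [?p \in ?X] => rewrite H
  | H : is_true (?p \notin ?X) |- context [?p \in ?X] => rewrite (negbTE H)
  end; rewrite ?eqxx /=); rewrite ?andbT ?andbF ?orbT ?orbF //=.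

Section Switch.

Variables m n : nat.
Implicit Types X : {set 'I_m * 'I_n}.

Definition switch X a a' b b' : {set 'I_m * 'I_n} :=
  X :\ (a, b) :\ (a', b') :|: [set (a, b'); (a', b)].

Lemma matching_number_switch X a a' b b' :
  matching_number X <= (matching_number (switch X a a' b b')).+1.
Proof.
have [M HM <-] := matching_number_attained X.
set N := M :\ (a, b) :\ (a', b').
have sNM : N \subset M by apply: subset_trans (subD1set _ _) (subD1set _ _).
have HN : is_matching (switch X a a' b b') N.
  apply: (matching_subset HM sNM (subset_trans _ (subsetUl _ _))).
  by do 2 apply: setSD; exact: matching_sub HM.
rewrite (cardsD1 (a, b) M) (cardsD1 (a', b') (M :\ (a, b))) -/N.
have HN_ge := matching_number_ge HN.
case: (boolP ((a, b) \in M)) => Mab; case: (boolP ((a', b') \in M :\ (a, b))) => Ma'b';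
  rewrite /= ?add0n ?add1n ?ltnS ?HN_ge ?(leqW HN_ge) //.
move: Ma'b'; rewrite in_setD1 => /andP [_ Ma'b'].
have free f : f \in N -> (f.1 != a) && (f.2 != b').
  rewrite /N !in_setD1 => /and3P [f_a'b' f_ab Mf].
  have /andP [-> _] := matching_apart HM Mf Mab f_ab.
  by have /andP [_ ->] := matching_apart HM Mf Ma'b' f_a'b'.
have HN1 : is_matching (switch X a a' b b') ((a, b') |: N).
  by apply: matching_setU1 => //; rewrite /switch !inE eqxx orbT.
have fresh : (a, b') \notin N by apply/negP => /free; rewrite eqxx.
by have := matching_number_ge HN1; rewrite cardsU1 fresh.
Qed.

Definition switchable X a a' b b' :=
  [&& (a, b) \in X, (a', b') \in X, (a, b') \notin X & (a', b) \notin X].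

Lemma switchable_neq X a a' b b' : switchable X a a' b b' -> (a != a') && (b != b').
Proof.
case/and4P=> ab a'b' ab' a'b; apply/andP; split.
  by apply: contraNneq a'b => <-.
by apply: contraNneq ab' => <-.
Qed.

Lemma switchK X a a' b b' : switchable X a a' b b' ->
  switch (switch X a a' b b') a a' b' b = X.
Proof.
move=> sw; have /andP [na nb] := switchable_neq sw.
case/and4P: sw => ab a'b' ab' a'b.
apply/setP => -[x y]; rewrite /switch !inE !xpair_eqE.
have [->|xa] := eqVneq x a; last have [->|xa'] := eqVneq x a';
(have [->|yb] := eqVneq y b; last have [->|yb'] := eqVneq y b'); simpl_by_hyps.
Qed.

Lemma switchable_switch X a a' b b' : switchable X a a' b b' ->
  switchable (switch X a a' b b') a a' b' b.
Proof.
move=> sw; have /andP [na nb] := switchable_neq sw.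
case/and4P: sw => ab a'b' ab' a'b.
by rewrite /switchable /switch !inE !xpair_eqE; simpl_by_hyps.
Qed.

Lemma degA_switch X a a' b b' c : switchable X a a' b b' ->
  degA (switch X a a' b b') c = degA X c.
Proof.
move=> sw; have /andP [na nb] := switchable_neq sw.
case/and4P: sw => ab a'b' ab' a'b; rewrite /degA.
have [->|ca] := eqVneq c a.
  have -> : [set y | (a, y) \in switch X a a' b b'] = b' |: ([set y | (a, y) \in X] :\ b).
    by apply/setP => y; rewrite /switch !inE !xpair_eqE; simpl_by_hyps; rewrite orbC.
  by apply: cards_exchange; rewrite inE.
have [->|ca'] := eqVneq c a'.
  have -> : [set y | (a', y) \in switch X a a' b b'] = b |: ([set y | (a', y) \in X] :\ b').
    by apply/setP => y; rewrite /switch !inE !xpair_eqE; simpl_by_hyps; rewrite orbC.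
  by apply: cards_exchange; rewrite inE.
by apply: eq_card => y; rewrite /switch !inE !xpair_eqE; simpl_by_hyps.
Qed.

End Switch.

Definition transpose m n (X : {set 'I_m * 'I_n}) : {set 'I_n * 'I_m} :=
  [set x | (x.2, x.1) \in X].

Lemma degB_transpose m n (X : {set 'I_m * 'I_n}) b : degB X b = degA (transpose X) b.
Proof. by apply: eq_card => a; rewrite !inE. Qed.

Lemma transpose_switch m n (X : {set 'I_m * 'I_n}) a a' b b' :
  transpose (switch X a a' b b') = switch (transpose X) b b' a a'.
Proof.
apply/setP => -[y x]; rewrite /switch !inE !xpair_eqE /=.
by case: (x == a); case: (x == a'); case: (y == b); case: (y == b').
Qed.

Lemma switchable_transpose m n (X : {set 'I_m * 'I_n}) a a' b b' :
  switchable X a a' b b' -> switchable (transpose X) b b' a a'.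
Proof. by rewrite /switchable !inE /= => /and4P [-> -> -> ->]. Qed.

Lemma degB_switch m n (X : {set 'I_m * 'I_n}) a a' b b' c : switchable X a a' b b' ->
  degB (switch X a a' b b') c = degB X c.
Proof.
by move=> sw; rewrite !degB_transpose transpose_switch degA_switch ?switchable_transpose.
Qed.

Lemma eq_card_exists_notin (T : finType) (X Y : {set T}) x :
  #|X| = #|Y| -> x \in X -> x \notin Y -> exists2 y, y \in Y & y \notin X.
Proof.
move=> eqXY xX xY; apply/subsetPn; apply: contraTN isT => sYX.
have : Y \proper X by apply/properP; split => //; exists x.
by move/proper_card; rewrite eqXY ltnn.
Qed.

Section Reconfiguration.

Variables m n : nat.
Implicit Types E F X Y : {set 'I_m * 'I_n}.

Definition same_degrees E F :=
  (forall a, degA E a = degA F a) /\ (forall b, degB E b = degB F b).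

Lemma same_degrees_refl E : same_degrees E E.
Proof. by []. Qed.

Lemma same_degrees_sym E F : same_degrees E F -> same_degrees F E.
Proof. by move=> [dA dB]; split => x; rewrite ?dA ?dB. Qed.

Lemma same_degrees_trans E F G : same_degrees E F -> same_degrees F G -> same_degrees E G.
Proof. by move=> [dA dB] [dA' dB']; split => x; rewrite ?dA ?dB ?dA' ?dB'. Qed.

Definition switch_step X Y : Prop :=
  exists a a' b b', switchable X a a' b b' /\ Y = switch X a a' b b'.

Lemma switch_step_sym X Y : switch_step X Y -> switch_step Y X.
Proof.
move=> [a [a' [b [b' [sw ->]]]]]; exists a, a', b', b.
by rewrite switchK // switchable_switch.
Qed.

Lemma switch_step_same_degrees X Y : switch_step X Y -> same_degrees X Y.
Proof.
by move=> [a [a' [b [b' [sw ->]]]]]; split => c; rewrite ?degA_switch ?degB_switch.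
Qed.

Lemma switch_step_matching_number X Y : switch_step X Y ->
  matching_number X <= (matching_number Y).+1 /\ matching_number Y <= (matching_number X).+1.
Proof.
move=> st; split; [move: st | move: (switch_step_sym st)].
all: by move=> [a [a' [b [b' [_ ->]]]]]; apply: matching_number_switch.
Qed.

Lemma same_degrees_eq E F : same_degrees E F -> E \subset F -> E = F.
Proof.
move=> [dA _] sEF; apply/eqP; rewrite eqEsubset sEF; apply/subsetP => x xF.
apply: contraT => xE.
have [y] : exists2 y, y \in [set y | (x.1, y) \in E] & y \notin [set y | (x.1, y) \in F].
  apply: (eq_card_exists_notin (x := x.2)); rewrite ?inE -?surjective_pairing //.
  by have := dA x.1; rewrite /degA => ->.
by rewrite !inE => /(subsetP sEF) ->.
Qed.

Lemma alternating_pattern E F : same_degrees E F -> E :\: F != set0 ->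
  exists a1 b1 a2 b2, [/\ (a1, b1) \in E :\: F, (a2, b1) \in F :\: E,
    (a2, b2) \in E :\: F & (a1, b2) \notin E :\: F].
Proof.
move=> [dA dB] /set0Pn [[x0 y0] H0].
pose row a := [set b | (a, b) \in E :\: F].
have row0 : 0 < #|row x0| by apply/card_gt0P; exists y0; rewrite inE.
(* Taking a1 with the fewest edges in E \ F forces row a2 to leave row a1. *)
have [a1 /card_gt0P [b1 b1row] a1min] :=
  @arg_minnP _ x0 (fun a => 0 < #|row a|) (fun a => #|row a|) row0.
move: (b1row); rewrite !inE => /andP [b1F b1E].
have [a2] : exists2 a2, a2 \in [set a | (a, b1) \in F] & a2 \notin [set a | (a, b1) \in E].
  by apply: (eq_card_exists_notin (x := a1)); rewrite ?inE //; apply: dB.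
rewrite !inE => a2F a2E.
have [b] : exists2 b, b \in [set b | (a2, b) \in E] & b \notin [set b | (a2, b) \in F].
  apply: (eq_card_exists_notin (x := b1)); rewrite ?inE //.
  by have := dA a2; rewrite /degA => ->.
rewrite !inE => a2bE a2bF.
have a2pos : 0 < #|row a2| by apply/card_gt0P; exists b; rewrite !inE a2bE a2bF.
have : ~~ (row a2 \subset row a1).
  apply: contraL (a1min a2 a2pos) => sub; rewrite -ltnNge; apply: proper_card.
  by apply/properP; split => //; exists b1; rewrite // !inE negb_and a2E orbT.
case/subsetPn => b2; rewrite !inE => b2row b2n.
by exists a1, b1, a2, b2; rewrite !inE b1F b1E a2F a2E b2row.
Qed.

Lemma card_setU1D2_lt (T : finType) (Z : {set T}) x y1 y2 :
  y1 \in Z -> y2 \in Z -> y1 != y2 -> #|x |: (Z :\ y1 :\ y2)| < #|Z|.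
Proof.
move=> y1Z y2Z ne; rewrite cardsU1 (cardsD1 y1 Z) y1Z (cardsD1 y2 (Z :\ y1)).
by rewrite [y2 \in _]in_setD1 y2Z eq_sym ne; case: (_ \notin _).
Qed.

Lemma switch_decreases_difference E F : same_degrees E F -> E :\: F != set0 ->
  (exists2 E', switch_step E E' & #|E' :\: F| < #|E :\: F|) \/
  (exists2 F', switch_step F F' & #|E :\: F'| < #|E :\: F|).
Proof.
move=> sd /(alternating_pattern sd) [a1 [b1 [a2 [b2 [h11 h21 h22 h12]]]]].
move: (h11) (h21) (h22); rewrite !inE => /andP [F11 E11] /andP [E21 F21] /andP [F22 E22].
have na : a1 != a2 by apply: contraNneq E21 => <-.
have nb : b1 != b2 by apply: contraNneq E21 => ->.
set B := (a1, b2) |: (E :\: F :\ (a1, b1) :\ (a2, b2)).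
have B_lt : #|B| < #|E :\: F|.
  by apply: card_setU1D2_lt; rewrite // xpair_eqE negb_and nb orbT.
have [E12 | E12] := boolP ((a1, b2) \in E).
- have F12 : (a1, b2) \in F by move: h12; rewrite !inE E12 andbT negbK.
  right; exists (switch F a1 a2 b2 b1).
    by exists a1, a2, b2, b1; rewrite /switchable F12 F21 F11 F22.
  apply: (leq_ltn_trans _ B_lt); apply/subset_leq_card/subsetP => -[x y].
  rewrite /B /switch !inE !xpair_eqE.
  have [->|xa] := eqVneq x a1; last have [->|xa'] := eqVneq x a2;
  (have [->|yb] := eqVneq y b1; last have [->|yb'] := eqVneq y b2); simpl_by_hyps.
- left; exists (switch E a1 a2 b1 b2).
    by exists a1, a2, b1, b2; rewrite /switchable E11 E22 E12 E21.
  apply: (leq_ltn_trans _ B_lt); apply/subset_leq_card/subsetP => -[x y].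
  rewrite /B /switch !inE !xpair_eqE.
  have [->|xa] := eqVneq x a1; last have [->|xa'] := eqVneq x a2;
  (have [->|yb] := eqVneq y b1; last have [->|yb'] := eqVneq y b2); simpl_by_hyps.
Qed.

Lemma same_degrees_switch_connected E F : same_degrees E F ->
  clos_refl_trans _ switch_step E F.
Proof.
have [k] := ubnP #|E :\: F|; elim: k E F => // k IH E F ltk sd.
have [sEF | nEF] := boolP (E :\: F == set0).
  by rewrite (same_degrees_eq sd) -?setD_eq0 //; apply: rt_refl.
case: (switch_decreases_difference sd nEF) => [[E' stE ltE] | [F' stF ltF]].
- apply: rt_trans (rt_step _ _ _ _ stE) (IH _ _ _ _) => //; first exact: leq_trans ltE ltk.
  exact: same_degrees_trans (same_degrees_sym (switch_step_same_degrees stE)) sd.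
- apply: rt_trans (IH _ _ _ _) (rt_step _ _ _ _ (switch_step_sym stF)) => //.
    exact: leq_trans ltF ltk.
  exact: same_degrees_trans sd (switch_step_same_degrees stF).
Qed.

Lemma same_degrees_reachable E F :
  clos_refl_trans _ switch_step E F -> same_degrees E F.
Proof.
elim=> [X Y /switch_step_same_degrees // | X | X Y Z _ dXY _ dYZ].
  exact: same_degrees_refl.
exact: same_degrees_trans dXY dYZ.
Qed.

End Reconfiguration.

Lemma clos_refl_trans_intermediate (T : Type) (R : T -> T -> Prop) (f : T -> nat) :
  (forall x y, R x y -> f x <= (f y).+1 /\ f y <= (f x).+1) ->
  forall x y, clos_refl_trans _ R x y ->
  forall k, minn (f x) (f y) <= k <= maxn (f x) (f y) ->
  exists2 z, clos_refl_trans _ R x z & f z = k.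
Proof.
move=> lip x y; elim=> {x y} [x y Rxy | x | x y z xy IHxy _ IHyz] k.
- have [l1 l2] := lip _ _ Rxy => kxy.
  have [->|->] : k = f x \/ k = f y by lia.
    by exists x; first exact: rt_refl.
  by exists y; first exact: rt_step.
- by rewrite minnn maxnn -eqn_leq => /eqP <-; exists x; first exact: rt_refl.
- move=> kxz; have [kxy | kyz] : (minn (f x) (f y) <= k <= maxn (f x) (f y)) \/
                                 (minn (f y) (f z) <= k <= maxn (f y) (f z)) by lia.
    exact: IHxy.
  by have [w yw <-] := IHyz k kyz; exists w; first exact: rt_trans xy yw.
Qed.

Lemma perm_of_sort_eq (T : eqType) (r : rel T) m (f g : 'I_m -> T) :
  sort r [seq f a | a <- enum 'I_m] = sort r [seq g a | a <- enum 'I_m] ->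
  exists p : {perm 'I_m}, forall a, f a = g (p a).
Proof.
move=> eq_sorted.
have : perm_eq [seq f a | a <- enum 'I_m] [tuple g a | a < m].
  by rewrite -(perm_sort r) eq_sorted perm_sort /=.
case/tuple_permP => p fp; exists p => a.
have : [tuple f i | i < m] = [tuple tnth [tuple g i | i < m] (p i) | i < m].
  exact: val_inj.
by move/(congr1 (fun t => tnth t a)); rewrite !tnth_mktuple.
Qed.

Section Relabelling.

Variables m n : nat.
Implicit Types G : {set 'I_m * 'I_n}.

Definition relabel (p : {perm 'I_m}) (q : {perm 'I_n}) G : {set 'I_m * 'I_n} :=
  [set x | (p x.1, q x.2) \in G].

Lemma degA_relabel p q G a : degA (relabel p q G) a = degA G (p a).
Proof.
rewrite /degA -[RHS](card_preimset _ (@perm_inj _ q)).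
by apply: eq_card => b; rewrite !inE.
Qed.

Lemma degB_relabel p q G b : degB (relabel p q G) b = degB G (q b).
Proof.
rewrite /degB -[RHS](card_preimset _ (@perm_inj _ p)).
by apply: eq_card => a; rewrite !inE.
Qed.

Lemma relabelK p q G : relabel p^-1 q^-1 (relabel p q G) = G.
Proof. by apply/setP => -[a b]; rewrite !inE /= !permKV. Qed.

Lemma matching_number_relabel_ge p q G :
  matching_number G <= matching_number (relabel p q G).
Proof.
have [M HM <-] := matching_number_attained G.
pose f (x : 'I_m * 'I_n) := (p x.1, q x.2).
have f_inj : injective f by move=> [x1 x2] [y1 y2] [/perm_inj -> /perm_inj ->].
rewrite -(card_preimset M f_inj); apply: matching_number_ge.
rewrite /is_matching; apply/andP; split.
  by apply/subsetP => x; rewrite !inE => /(subsetP (matching_sub HM)).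
apply/forall_inP => e1; rewrite inE => M1; apply/forall_inP => e2; rewrite inE => M2.
apply/implyP => ne.
have := matching_apart HM M1 M2; rewrite (inj_eq f_inj) => /(_ ne).
by rewrite /= !(inj_eq perm_inj).
Qed.

Lemma matching_number_relabel p q G :
  matching_number (relabel p q G) = matching_number G.
Proof.
apply/eqP; rewrite eqn_leq matching_number_relabel_ge.
by rewrite -{2}(relabelK p q G) matching_number_relabel_ge.
Qed.

Lemma realizes_same_degrees G H dA dB :
  same_degrees G H -> realizes G dA dB -> realizes H dA dB.
Proof.
move=> [dGH_A dGH_B] rG; rewrite /realizes -rG /bdeg_seq.
by congr (sort _ _, sort _ _); apply: eq_map => x; rewrite ?dGH_A ?dGH_B.
Qed.

Lemma realizes_relabel G H dA dB : realizes G dA dB -> realizes H dA dB ->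
  exists p q, same_degrees G (relabel p q H).
Proof.
rewrite /realizes /bdeg_seq => -[<- <-] [eqA eqB].
have [p degAp] := perm_of_sort_eq (esym eqA).
have [q degBq] := perm_of_sort_eq (esym eqB).
by exists p, q; split => x; rewrite ?degA_relabel ?degB_relabel.
Qed.

End Relabelling.

Lemma realizes_size m n (G : {set 'I_m * 'I_n}) dA dB : realizes G dA dB ->
  size dA = m /\ size dB = n.
Proof.
by rewrite /realizes /bdeg_seq => -[<- <-]; rewrite !size_sort !size_map -!enumT !size_enum_ord.
Qed.

Lemma realizes_dims m1 n1 m2 n2 (G1 : {set 'I_m1 * 'I_n1}) (G2 : {set 'I_m2 * 'I_n2}) dA dB :
  realizes G1 dA dB -> realizes G2 dA dB -> m1 = m2 /\ n1 = n2.
Proof. by move=> /realizes_size [<- <-] /realizes_size [<- <-]. Qed.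

Theorem theorem4 (dA dB : seq nat)
  (m1 n1 : nat) (G1 : {set 'I_m1 * 'I_n1})
  (m2 n2 : nat) (G2 : {set 'I_m2 * 'I_n2})
  (nu_min nu_max nu : nat) :
  realizes G1 dA dB -> matching_number G1 = nu_min ->
  realizes G2 dA dB -> matching_number G2 = nu_max ->
  nu_min <= nu <= nu_max ->
  exists (m n : nat) (G : {set 'I_m * 'I_n}),
    realizes G dA dB /\ matching_number G = nu.
Proof.
move=> rG1 <- rG2 <- range.
have [em en] := realizes_dims rG1 rG2; subst m2 n2.
have [p [q sd]] := realizes_relabel rG1 rG2.
have range' : minn (matching_number G1) (matching_number (relabel p q G2)) <= nu <=
              maxn (matching_number G1) (matching_number (relabel p q G2)).
  by rewrite matching_number_relabel; move: range; lia.
have [G reach <-] := clos_refl_trans_intermediate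
  (@switch_step_matching_number _ _) (same_degrees_switch_connected sd) range'.
exists _, _, G; split => //.
exact: realizes_same_degrees (same_degrees_reachable reach) rG1.
Qed.
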